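(* Let $\mathcal A,\mathcal B_1,\mathcal B_2$ be finite-dimensional complex Hilbert spaces and $B\in\mathcal B(\mathcal B_2\otimes\mathcal B_1,\mathcal A)$. The map $\mathcal W:\mathcal B(\mathcal A)\to\mathcal B(\mathcal B_2)$, $\mathcal W(A)=\operatorname{Tr}_{\mathcal B_1}[B^\dagger AB]$, is injective if and only if there exists an injective linear map $\mathcal V:\mathcal B(\mathcal A)\to\mathcal B(\mathcal B_2)$ such that $B(\mathcal V(A)\otimes I_{\mathcal B_1})B^\dagger=A$ for all $A\in\mathcal B(\mathcal A)$. In that case $\mathcal W(A)=\operatorname{Tr}_{\mathcal B_1}[B^\dagger B(\mathcal V(A)\otimes I_{\mathcal B_1})B^\dagger B]$ for all $A$.
   Context: $\mathcal B(\mathcal X,\mathcal Y)$ denotes the space of linear operators from $\mathcal X$ to $\mathcal Y$, and $\mathcal B(\mathcal X)=\mathcal B(\mathcal X,\mathcal X)$. $\operatorname{Tr}_{\mathcal B_1}$ denotes the partial trace over $\mathcal B_1$. *)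

From mathcomp Require Import all_boot all_order all_algebra.
From mathcomp Require Import complex mxtens.
From mathcomp Require Import reals.
Set Implicit Arguments. Unset Strict Implicit. Unset Printing Implicit Defensive.
Import GRing.Theory Num.Theory.
Local Open Scope ring_scope.

Definition adjmx {C : numClosedFieldType} {m n : nat} (M : 'M[C]_(m, n)) : 'M[C]_(n, m) :=
  map_mx Num.conj (M^T).

(* Partial trace over the second tensor factor: for X acting on
   C^n (x) C^k (indices (i,k) encoded by mxtens_index, the same encoding
   as the Kronecker product [*t]), ptrace2 X acts on C^n. *)
Definition ptrace2 {C : pzRingType} {n k : nat} (X : 'M[C]_(n * k)) : 'M[C]_n :=
  \matrix_(i, j) \sum_(l < k) X (mxtens_index (i, l)) (mxtens_index (j, l)).

Definition Wmap {C : numClosedFieldType} {a b1 b2 : nat}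
  (B : 'M[C]_(a, b2 * b1)) (A : 'M[C]_a) : 'M[C]_b2 :=
  ptrace2 (adjmx B *m A *m B).

(* With respect to the trace pairing (Y, X) |-> tr (Y X), the map W is the
   adjoint of the sandwich map Phi X = B (X (x) I) B^dagger, because the
   partial trace is adjoint to X |-> X (x) I.  In finite dimension a linear map
   is onto exactly when its adjoint is one-to-one, and an onto linear map has a
   linear right inverse V, which is injective; conversely Phi (V A) = A for all
   A forces W to be injective.  The formula for W A is W applied to Phi (V A). *)

From HB Require Import structures.
From mathcomp Require Import all_boot all_order all_algebra.
From mathcomp Require Import complex mxtens.
From mathcomp Require Import reals.
Set Implicit Arguments. Unset Strict Implicit. Unset Printing Implicit Defensive.
Import GRing.Theory Num.Theory.
Local Open Scope ring_scope.

Section TraceForm.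
Variable C : comPzRingType.

Lemma big_mxtens_index m n (F : 'I_(m * n) -> C) :
  \sum_k F k = \sum_i \sum_j F (mxtens_index (i, j)).
Proof.
have tens_bij : {on 'I_(m * n), bijective (@mxtens_index m n)}.
  by exists (@mxtens_unindex m n) => k _; [exact: mxtens_indexK | exact: mxtens_unindexK].
by rewrite (reindex _ tens_bij) pair_big; apply: eq_bigr => -[].
Qed.

Lemma mxtrace_mul_tens1 n k (Z : 'M[C]_(n * k)) (X : 'M[C]_n) :
  \tr (Z *m (X *t (1%:M : 'M[C]_k))) = \tr (ptrace2 Z *m X).
Proof.
rewrite /mxtrace big_mxtens_index; apply: eq_bigr => i _.
under eq_bigr do rewrite mxE big_mxtens_index.
rewrite mxE exchange_big; apply: eq_bigr => j _.
rewrite mxE mulr_suml; apply: eq_bigr => l _.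
rewrite (bigD1 l) //= big1 => [|l' /negbTE l'l]; rewrite tensmxE mxE ?eqxx ?mulr1 ?addr0 //.
by rewrite l'l !mulr0.
Qed.

Lemma mxtrace_trmx_mul m n (A B : 'M[C]_(m, n)) :
  \tr (A^T *m B) = (mxvec B *m (mxvec A)^T) 0 0.
Proof.
rewrite mxE (reindex _ (curry_mxvec_bij _ _)) /=.
under [LHS]eq_bigr do rewrite mxE.
rewrite exchange_big pair_bigA; apply: eq_bigr => -[i j] _ /=.
by rewrite !mxE !mxvecE mulrC.
Qed.

Lemma mxtrace_mul_eq0 n (Z : 'M[C]_n) : (forall X, \tr (Z *m X) = 0) -> Z = 0.
Proof.
move=> trZ0; apply/matrixP => i j; rewrite mxE -(trZ0 (delta_mx j i)).
rewrite /mxtrace (bigD1 i) //= big1 => [|k /negbTE ki]; rewrite mxE.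
  rewrite (bigD1 j) //= big1 => [|l /negbTE lj]; rewrite mxE ?lj ?mulr0 //.
  by rewrite !eqxx mulr1 !addr0.
by rewrite big1 // => l _; rewrite mxE ki andbF mulr0.
Qed.

End TraceForm.

Section AdjointPair.
Variables (C : fieldType) (m n : nat).
Variables (f : {linear 'M[C]_n -> 'M[C]_m}) (g : 'M[C]_m -> 'M[C]_n).
Hypothesis fg_adjoint : forall Y X, \tr (Y *m f X) = \tr (g Y *m X).

Lemma adjoint_injective_row_full : injective g -> row_full (lin_mx f).
Proof.
move=> g_inj; have g0 : g 0 = 0.
  by apply: mxtrace_mul_eq0 => X; rewrite -fg_adjoint mul0mx mxtrace0.
rewrite -cokermx_eq0; apply/eqP/matrixP => p q; rewrite mxE.
(* Y is chosen so that tr (Y *m f X) reads mxvec (f X) against column q of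
   the cokernel of lin_mx f. *)
pose Y := (vec_mx (col q (cokermx (lin_mx f)))^T)^T.
suff /g_inj /matrixP Y0 : g Y = g 0.
  by case/mxvec_indexP: p => i j; move: (Y0 j i); rewrite !mxE.
rewrite g0; apply: mxtrace_mul_eq0 => X.
rewrite -fg_adjoint mxtrace_trmx_mul vec_mxK trmxK colE -mul_vec_lin.
by rewrite -mulmxA (mulmxA (lin_mx f)) mulmx_coker mul0mx mulmx0 mxE.
Qed.

Lemma adjoint_injective_rinv :
  injective g -> exists V : {linear 'M[C]_m -> 'M[C]_n}, cancel V f.
Proof.
move=> /adjoint_injective_row_full f_full.
exists (vec_mx \o mulmxr (pinvmx (lin_mx f)) \o mxvec) => A /=.
by rewrite -[LHS]mxvecK -mul_vec_lin vec_mxK mulmxKpV ?mxvecK ?submx_full.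
Qed.

Lemma rinv_adjoint_injective (V : 'M[C]_m -> 'M[C]_n) : cancel V f -> injective g.
Proof.
move=> VK Y1 Y2 gY12; apply/eqP; rewrite -subr_eq0; apply/eqP.
apply: mxtrace_mul_eq0 => A.
by rewrite -(VK A) mulmxBl raddfB /= !fg_adjoint gY12 subrr.
Qed.

End AdjointPair.

Section SandwichTens1.
Variables (C : comPzRingType) (a b1 b2 : nat).
Variables (Bl : 'M[C]_(a, b2 * b1)) (Br : 'M[C]_(b2 * b1, a)).

Definition sandwich_tens1 (X : 'M[C]_b2) : 'M[C]_a :=
  Bl *m (X *t (1%:M : 'M[C]_b1)) *m Br.

Fact sandwich_tens1_is_linear : linear sandwich_tens1.
Proof.
move=> c X1 X2; rewrite /sandwich_tens1.
have -> : (c *: X1 + X2) *t (1%:M : 'M[C]_b1) = c *: (X1 *t 1%:M) + X2 *t 1%:M.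
  by apply/matrixP => p q; rewrite !mxE mulrDl mulrA.
by rewrite mulmxDr mulmxDl -scalemxAr -scalemxAl.
Qed.

HB.instance Definition _ :=
  GRing.isLinear.Build C 'M[C]_b2 'M[C]_a _ sandwich_tens1 sandwich_tens1_is_linear.

End SandwichTens1.

Lemma sandwich_tens1_adjoint (C : numClosedFieldType) a b1 b2
    (B : 'M[C]_(a, b2 * b1)) (Y : 'M[C]_a) (X : 'M[C]_b2) :
  \tr (Y *m sandwich_tens1 B (adjmx B) X) = \tr (Wmap B Y *m X).
Proof. by rewrite /Wmap -mxtrace_mul_tens1 !mulmxA mxtrace_mulC !mulmxA. Qed.

Theorem corollary2 (R : realType) (a b1 b2 : nat) (B : 'M[R[i]]_(a, b2 * b1)) :
  (injective (Wmap B) <->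
     exists V : {linear 'M[R[i]]_a -> 'M[R[i]]_b2},
       injective V /\
       (forall A : 'M[R[i]]_a, B *m (V A *t (1%:M : 'M[R[i]]_b1)) *m adjmx B = A))
  /\
  (forall V : {linear 'M[R[i]]_a -> 'M[R[i]]_b2},
     injective V ->
     (forall A : 'M[R[i]]_a, B *m (V A *t (1%:M : 'M[R[i]]_b1)) *m adjmx B = A) ->
     forall A : 'M[R[i]]_a,
       Wmap B A =
       ptrace2 (adjmx B *m B *m (V A *t (1%:M : 'M[R[i]]_b1)) *m adjmx B *m B)).
Proof.
have adjoint := sandwich_tens1_adjoint B.
split; last by move=> V _ VK A; rewrite /Wmap -{1}(VK A) !mulmxA.
split=> [/(adjoint_injective_rinv adjoint) [V VK] | [V [_ VK]]].
  by exists V; split; [exact: can_inj VK | exact: VK].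
exact: (rinv_adjoint_injective adjoint (V := V)) VK.
Qed.
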